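(* Consider the problem $\min_{x\in\mathbb{R}^n}\Phi(x)$, $\Phi=\Psi+\mathcal{X}$, $\Psi=f+h$, where $f$ is differentiable with $L_f$-Lipschitz gradient (possibly nonconvex), $h$ is convex and differentiable with $L_h$-Lipschitz gradient, $L_\Psi=L_f+L_h>0$, and $\mathcal{X}$ is a proper closed convex function with bounded domain. Let $\mathcal{P}(x,y,c):=\operatorname{argmin}_u\{\langle y,u\rangle+\frac{1}{2c}\|u-x\|^2+\mathcal{X}(u)\}$ and $\mathcal{G}(x,y,c):=\frac1c[x-\mathcal{P}(x,y,c)]$, and assume there is $M$ with $\|\mathcal{P}(x,y,c)\|\le M$ for all $c>0$, $x,y$. Run the composite AG method from $x_0$ ($x^{ag}_0=x_0$): for $k\ge1$, $$x^{md}_k=(1-\alpha_k)x^{ag}_{k-1}+\alpha_kx_{k-1},\quad x_k=\mathcal{P}(x_{k-1},\nabla\Psi(x^{md}_k),\lambda_k),\quad x^{ag}_k=\mathcal{P}(x^{md}_k,\nabla\Psi(x^{md}_k),\beta_k),$$ with $\alpha_k=\frac{2}{k+1}$, $\beta_k=\frac{1}{2L_\Psi}$, $\lambda_k=\frac{k\beta_k}{2}$. Assume an optimal solution $x^*$ of $\min\Phi$ exists. Then for any $N\ge1$, $$\min_{k=1,\ldots,N}\|\mathcal{G}(x^{md}_k,\nabla\Psi(x^{md}_k),\beta_k)\|^2\le24L_\Psi\Big[\frac{4L_\Psi\|x_0-x^*\|^2}{N^2(N+1)}+\frac{L_f}{N}(\|x^*\|^2+2M^2)\Big].$$ If in addition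 $L_f=0$, then $\Phi(x^{ag}_N)-\Phi(x^* )\le\frac{4L_\Psi\|x_0-x^*\|^2}{N(N+1)}$.
   Context: $\|\cdot\|$ is the Euclidean norm. *)

From HB Require Import structures.
From mathcomp Require Import all_boot all_order all_algebra.
From mathcomp Require Import all_classical all_reals all_analysis.
Set Implicit Arguments. Unset Strict Implicit. Unset Printing Implicit Defensive.
Import Order.TTheory GRing.Theory Num.Theory.
Import numFieldNormedType.Exports.
Local Open Scope ring_scope.
Local Open Scope classical_set_scope.

Section Defs.
Variables (R : realType) (n : nat).
Notation V := 'rV[R]_n.

Definition dot (u v : V) : R := \sum_(i < n) u ord0 i * v ord0 i.
Definition enorm (u : V) : R := Num.sqrt (dot u u).

Definition is_gradient (f : V -> R) (g : V -> V) : Prop :=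
  forall x, differentiable f x /\ forall v, 'd f x v = dot (g x) v.

Definition lipschitz_with (L : R) (g : V -> V) : Prop :=
  forall x y, enorm (g x - g y) <= L * enorm (x - y).

Definition convex_fun (h : V -> R) : Prop :=
  forall x y (t : R), 0 <= t <= 1 ->
    h (t *: x + (1 - t) *: y) <= t * h x + (1 - t) * h y.

Definition proper_fun (X : V -> \bar R) : Prop :=
  (forall x, X x != -oo%E) /\ (exists x, (X x < +oo)%E).

Definition closed_fun (X : V -> \bar R) : Prop :=
  closed [set p : V * R | (X p.1 <= p.2%:E)%E].

Definition convex_efun (X : V -> \bar R) : Prop :=
  forall (x y : V) (t : R), 0 < t < 1 ->
    (X (t *: x + (1 - t) *: y)%R <= (t%:E * X x + (1 - t)%:E * X y)%E)%E.

Definition bounded_dom (X : V -> \bar R) : Prop :=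
  exists B : R, forall x, (X x < +oo)%E -> enorm x <= B.

Definition prox_obj (X : V -> \bar R) (x y : V) (c : R) (u : V) : \bar R :=
  ((dot y u + enorm (u - x) ^+ 2 / (2 * c))%:E + X u)%E.

(* P x y c is a (the, by strong convexity) minimizer of prox_obj, c > 0 *)
Definition is_prox_map (X : V -> \bar R) (P : V -> V -> R -> V) : Prop :=
  forall x y c, 0 < c -> forall u, (prox_obj X x y c (P x y c) <= prox_obj X x y c u)%E.

Definition G_map (P : V -> V -> R -> V) (x y : V) (c : R) : V :=
  c^-1 *: (x - P x y c).

Definition ag_alpha (k : nat) : R := 2 / (k%:R + 1).
Definition ag_beta (L : R) : R := 1 / (2 * L).
Definition ag_lambda (L : R) (k : nat) : R := k%:R * ag_beta L / 2.

Definition ag_md (xag x : V) (k : nat) : V :=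
  (1 - ag_alpha k) *: xag + ag_alpha k *: x.

Fixpoint ag_state (P : V -> V -> R -> V) (gPsi : V -> V) (L : R) (x0 : V)
    (k : nat) : V * V :=
  match k with
  | 0 => (x0, x0)
  | k'.+1 =>
      let (x, xag) := ag_state P gPsi L x0 k' in
      let md := ag_md xag x k'.+1 in
      (P x (gPsi md) (ag_lambda L k'.+1), P md (gPsi md) (ag_beta L))
  end.

Definition ag_x P gPsi L x0 k : V := (ag_state P gPsi L x0 k).1.
Definition ag_xag P gPsi L x0 k : V := (ag_state P gPsi L x0 k).2.
(* x^md_k for k >= 1 *)
Definition ag_xmd P gPsi L x0 (k : nat) : V :=
  ag_md (ag_xag P gPsi L x0 k.-1) (ag_x P gPsi L x0 k.-1) k.

End Defs.

(* A potential-function argument. With weights w_k = k (k + 1) / 2, the quantity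
   w_k (Phi(x^ag_k) - Phi(x^* )) + 2 L_Psi |x^* - x_k|^2 decreases at every step by at
   least w_k |G_k|^2 / (8 L_Psi), up to an error L_f (|x^*|^2 + 2 M^2) k caused by the
   nonconvexity of f. Each step combines the descent lemma for Psi, the lower
   linearisations of f (exact up to L_f/2 |.|^2) and of the convex h, and the
   three-point property of the prox map, with x^md_k as the convex combination of
   x^ag_(k-1) and x_(k-1). Summing, the minimum of |G_k|^2 is at most its w-weighted
   average, and sum_(k <= N) w_k = N (N + 1) (N + 2) / 6; when L_f = 0 there is no
   error and the potential bounds the gap at x^ag_N directly. *)

From HB Require Import structures.
From mathcomp Require Import all_boot all_order all_algebra.
From mathcomp Require Import all_classical all_reals all_analysis.
From mathcomp Require Import ring lra.
Import Order.TTheory GRing.Theory Num.Theory.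
Import numFieldNormedType.Exports.
Set Implicit Arguments. Unset Strict Implicit.
Local Open Scope ring_scope.
Local Open Scope classical_set_scope.

Section InnerProduct.
Variables (R : realType) (n : nat).
Implicit Types (u v w : 'rV[R]_n) (a b : R).

Lemma dotC u v : dot u v = dot v u.
Proof. by apply: eq_bigr => i _; rewrite mulrC. Qed.

Lemma dotDl u v w : dot (u + v) w = dot u w + dot v w.
Proof. by rewrite /dot -big_split; apply: eq_bigr => i _; rewrite mxE mulrDl. Qed.

Lemma dotZl a u w : dot (a *: u) w = a * dot u w.
Proof. by rewrite /dot mulr_sumr; apply: eq_bigr => i _; rewrite mxE mulrA. Qed.

Lemma dotNl u w : dot (- u) w = - dot u w.
Proof. by rewrite -scaleN1r dotZl mulN1r. Qed.

Lemma dotBl u v w : dot (u - v) w = dot u w - dot v w.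
Proof. by rewrite dotDl dotNl. Qed.

Lemma dotDr u v w : dot w (u + v) = dot w u + dot w v.
Proof. by rewrite dotC dotDl !(dotC w). Qed.

Lemma dotZr a u w : dot w (a *: u) = a * dot w u.
Proof. by rewrite dotC dotZl dotC. Qed.

Lemma dotNr u w : dot w (- u) = - dot w u.
Proof. by rewrite dotC dotNl dotC. Qed.

Lemma dotBr u v w : dot w (u - v) = dot w u - dot w v.
Proof. by rewrite dotDr dotNr. Qed.

Lemma dot_ge0 u : 0 <= dot u u.
Proof. by apply: sumr_ge0 => i _; rewrite -expr2 sqr_ge0. Qed.

Lemma dot_eq0 u : (dot u u == 0) = (u == 0).
Proof.
apply/idP/eqP => [|->]; last by rewrite -(scale0r 0) dotZl mul0r.
rewrite psumr_eq0 => [/allP u0|i _]; last by rewrite -expr2 sqr_ge0.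
apply/rowP => i; rewrite mxE.
by have /u0 := mem_index_enum i; rewrite /= mulf_eq0 orbb => /eqP.
Qed.

Lemma dot_subC u v : dot (u - v) (u - v) = dot (v - u) (v - u).
Proof. by rewrite -opprB dotNl dotNr opprK. Qed.

Lemma enorm_sq u : enorm u ^+ 2 = dot u u.
Proof. by rewrite sqr_sqrtr // dot_ge0. Qed.

Lemma enorm_ge0 u : 0 <= enorm u.
Proof. exact: sqrtr_ge0. Qed.

Lemma enormZ a u : enorm (a *: u) = `|a| * enorm u.
Proof. by rewrite /enorm dotZl dotZr mulrA -expr2 sqrtrM ?sqr_ge0 // sqrtr_sqr. Qed.

Lemma dot_le_enorm u v : dot u v <= enorm u * enorm v.
Proof.
have enorm_gt0 w : w != 0 -> 0 < enorm w.
  by rewrite -dot_eq0 => w0; rewrite sqrtr_gt0 lt_def w0 dot_ge0.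
have [->|/enorm_gt0 u0] := eqVneq u 0.
  by rewrite -(scale0r 0) dotZl mul0r mulr_ge0 ?enorm_ge0.
have [->|/enorm_gt0 v0] := eqVneq v 0.
  by rewrite -(scale0r 0) dotZr mul0r mulr_ge0 ?enorm_ge0.
(* Cauchy-Schwarz from 0 <= | |v| u - |u| v |^2 *)
have := dot_ge0 (enorm v *: u - enorm u *: v).
rewrite !(dotBl, dotBr, dotZl, dotZr) -!enorm_sq (dotC v u) => uv_ge0.
by rewrite -subr_ge0 -(pmulr_rge0 _ (mulr_gt0 u0 v0)); nra.
Qed.

Lemma dot_lincomb a b u v :
  dot (a *: u + b *: v) (a *: u + b *: v) =
  a ^+ 2 * dot u u + 2 * a * b * dot u v + b ^+ 2 * dot v v.
Proof. by rewrite !(dotDl, dotDr, dotZl, dotZr) (dotC v u); ring. Qed.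

Lemma dot_sub u v : dot (u - v) (u - v) = dot u u - 2 * dot u v + dot v v.
Proof. by rewrite !(dotBl, dotBr) (dotC v u); ring. Qed.

Lemma dot_add_le u v : dot (u + v) (u + v) <= 2 * dot u u + 2 * dot v v.
Proof.
by have := dot_ge0 (u - v); rewrite dot_sub !(dotDl, dotDr) (dotC v u); lra.
Qed.

Lemma dot_sub_le u v : dot (u - v) (u - v) <= 2 * dot u u + 2 * dot v v.
Proof. by have := dot_add_le u (- v); rewrite !(dotNl, dotNr) opprK. Qed.

Lemma dot_convex_comb_le a u v : 0 <= a <= 1 ->
  dot ((1 - a) *: u + a *: v) ((1 - a) *: u + a *: v)
  <= (1 - a) * dot u u + a * dot v v.
Proof.
move=> /andP[a0 a1]; rewrite dot_lincomb.
have := dot_ge0 (u - v); rewrite dot_sub => uv_ge0.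
have : 0 <= a * (1 - a) by rewrite mulr_ge0 ?subr_ge0.
by nra.
Qed.

Lemma dot_convex_comb_dist_le a u v w (B : R) (x := (1 - a) *: u + a *: v) :
  0 <= a <= 1 -> dot u u <= B -> dot v v <= B ->
  (1 - a) * dot (u - x) (u - x) + a * dot (w - x) (w - x)
  <= 2 * a * (dot w w + 2 * B).
Proof.
move=> a01 uB vB; have /andP[a0 a1] := a01.
rewrite (_ : u - x = a *: (u - v)); last by apply/rowP => i; rewrite !mxE; ring.
rewrite dotZl dotZr.
have B0 : 0 <= B := le_trans (dot_ge0 u) uB.
have xB : dot x x <= B.
  by apply: le_trans (dot_convex_comb_le u v a01) _; nra.
have aB0 : 0 <= a * B by rewrite mulr_ge0.
have uvB : (1 - a) * a * a * dot (u - v) (u - v) <= a * B.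
  have quarter : (1 - a) * a <= 1 / 4.
    by have := sqr_ge0 (2 * a - 1); rewrite expr2; nra.
  have e0 : 0 <= (1 - a) * a * a by rewrite !mulr_ge0 // subr_ge0.
  have D4 : dot (u - v) (u - v) <= 4 * B by have := dot_sub_le u v; lra.
  have := ler_wpM2r aB0 quarter; have := ler_wpM2l e0 D4; rewrite !mulrA; lra.
have wxB : a * dot (w - x) (w - x) <= a * (2 * dot w w + 2 * B).
  by apply: ler_wpM2l => //; have := dot_sub_le w x; lra.
by rewrite !mulrA; lra.
Qed.

End InnerProduct.

Lemma le_of_le_addM_small (R : realFieldType) (a b c : R) : 0 <= c ->
  (forall t, 0 < t < 1 -> a <= b + t * c) -> a <= b.
Proof.
move=> c0 small; apply/ler_addgt0Pr => e e0.
have ec : 0 < 2 * e + c by lra.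
have t0 : 0 < e / (2 * e + c) by rewrite divr_gt0.
have t1 : e / (2 * e + c) < 1 by rewrite ltr_pdivrMr // mul1r; lra.
have := small _ (introT andP (conj t0 t1)).
have : e / (2 * e + c) * c <= e by rewrite mulrAC ler_pdivrMr //; nra.
lra.
Qed.

Section DescentLemma.
Variables (R : realType) (n : nat).
Variables (F : 'rV[R]_n -> R) (G : 'rV[R]_n -> 'rV[R]_n) (L : R).
Hypotheses (FG : is_gradient F G) (GL : lipschitz_with L G).

Lemma is_derive_along (x d : 'rV[R]_n) (c : R) :
  is_derive c 1 (fun t => F (t *: d + x)) (dot (G (c *: d + x)) d).
Proof.
have [Fd FdE] := FG (c *: d + x).
have quotE : (fun t : R => t^-1 *: (F ((t *: 1 + c) *: d + x) - F (c *: d + x))) =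
             (fun t : R => t^-1 *: ((F \o shift (c *: d + x)) (t *: d) - F (c *: d + x))).
  by apply/funext => t /=; rewrite [t *: 1]mulr1 scalerDl addrA.
split; first by rewrite /derivable /= quotE; exact: diff_derivable.
by rewrite /derive /= quotE -/(derive F _ d) deriveE // FdE.
Qed.

Lemma lipschitz_gradient_le x y :
  F y <= F x + dot (G x) (y - x) + L / 2 * dot (y - x) (y - x).
Proof.
set d := y - x; set A := dot (G x) d; set B := L / 2 * dot d d.
(* the mean value theorem applied to t |-> F (x + t d) - t A - t^2 B on [0, 1] *)
pose phi := (fun t => F (t *: d + x)) - (A \*: id) - (B \*: (id ^+ 2)).
have dphi c : is_derive c (1 : R) phi (dot (G (c *: d + x)) d - A - B * (2 * c)).
  (* [is_derive_eq] finds the derivative of the first summand by instance search *)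
  have psi_d := is_derive_along x d c; apply: is_derive_eq.
  by rewrite expr1 /GRing.scale /= !mulr1.
have cphi : {within `[0, 1], continuous phi}.
  apply: continuous_subspaceT => t; apply: differentiable_continuous.
  apply/derivable1_diffP; exact: (@ex_derive _ _ _ _ _ _ _ (dphi t)).
have [c] := MVT ltr01 (fun c _ => dphi c) cphi.
rewrite in_itv /= => /andP[c0 c1].
have slope_le : dot (G (c *: d + x)) d - A <= L * c * dot d d.
  rewrite /A -dotBl; apply: le_trans (dot_le_enorm _ _) _.
  have := GL (c *: d + x) x; rewrite addrK enormZ (ger0_norm (ltW c0)) => GLc.
  rewrite -enorm_sq expr2 mulrA; apply: ler_wpM2r; first exact: enorm_ge0.
  by rewrite -mulrA.
have phiE t : phi t = F (t *: d + x) - A * t - B * (t * t) by [].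
rewrite !phiE scale1r scale0r add0r /d subrK; rewrite /B in slope_le *; lra.
Qed.

End DescentLemma.

Section GradientInequalities.
Variables (R : realType) (n : nat).
Variables (F : 'rV[R]_n -> R) (G : 'rV[R]_n -> 'rV[R]_n) (L : R).
Hypotheses (FG : is_gradient F G) (GL : lipschitz_with L G).

Lemma lipschitz_gradient_ge x y :
  F x + dot (G x) (y - x) <= F y + L / 2 * dot (y - x) (y - x).
Proof.
have FGN : is_gradient (fun u => - F u) (fun u => - G u).
  move=> u; have [Fd FdE] := FG u; split; first exact: differentiableN.
  move=> v; rewrite (_ : (fun u => - F u) = - F) // diffN //.
  by change (- 'd F u v = dot (- G u) v); rewrite FdE dotNl.
have GLN : lipschitz_with L (fun u => - G u).
  by move=> u v; rewrite -opprD /enorm dotNl dotNr opprK; exact: GL.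
by have := lipschitz_gradient_le FGN GLN x y; rewrite dotNl; lra.
Qed.

Lemma convex_gradient_le : convex_fun F -> 0 <= L -> forall x y,
  F x + dot (G x) (y - x) <= F y.
Proof.
move=> Fconv L0 x y; apply: (@le_of_le_addM_small _ _ _ (L / 2 * dot (y - x) (y - x))).
  by rewrite mulr_ge0 ?divr_ge0 ?dot_ge0.
move=> t /andP[t0 t1].
have := Fconv y x t (introT andP (conj (ltW t0) (ltW t1))).
have -> : t *: y + (1 - t) *: x = t *: (y - x) + x.
  by apply/rowP => i; rewrite !mxE; ring.
have := lipschitz_gradient_ge x (t *: (y - x) + x).
rewrite addrK dotZr dotZl dotZr => Fge Fconv_t.
rewrite -(ler_pM2l t0); nra.
Qed.

End GradientInequalities.

Section Prox.
Variables (R : realType) (n : nat).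
Variables (X : 'rV[R]_n -> \bar R) (P : 'rV[R]_n -> 'rV[R]_n -> R -> 'rV[R]_n).
Hypotheses (Xproper : proper_fun X) (Xconvex : convex_efun X) (Pprox : is_prox_map X P).
Implicit Types (u v x y : 'rV[R]_n) (c t : R).
Local Notation Xr u := (fine (X u)).
Local Notation sq u := (dot u u).

Lemma proper_fineK u : (X u < +oo)%E -> (Xr u)%:E = X u.
Proof. by move=> Xu; rewrite fineK // fin_numE Xproper.1 lt_eqF. Qed.

Lemma prox_dom x y c : 0 < c -> (X (P x y c) < +oo)%E.
Proof.
move=> c0; have [u Xu] := Xproper.2.
have := Pprox x y c0 u; rewrite /prox_obj -(proper_fineK Xu).
by move: (Xproper.1 (P x y c)); case: (X (P x y c)) => // r _ _; exact: ltry.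
Qed.

Lemma prox_le x y c u : 0 < c -> (X u < +oo)%E ->
  dot y (P x y c) + sq (P x y c - x) / (2 * c) + Xr (P x y c)
  <= dot y u + sq (u - x) / (2 * c) + Xr u.
Proof.
move=> c0 Xu; have := Pprox x y c0 u.
by rewrite /prox_obj -(proper_fineK Xu) -(proper_fineK (prox_dom x y c0))
  -!EFinD lee_fin !enorm_sq.
Qed.

Lemma convex_dom_le u v t : 0 < t <= 1 -> (X u < +oo)%E -> (X v < +oo)%E ->
  (X (t *: u + (1 - t) *: v) < +oo)%E /\
  Xr (t *: u + (1 - t) *: v) <= t * Xr u + (1 - t) * Xr v.
Proof.
case/andP=> t0; rewrite le_eqVlt => /orP[/eqP-> Xu _|t1 Xu Xv].
  by rewrite subrr scale1r scale0r addr0 !mul1r mul0r addr0; split.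
have := Xconvex u v (introT andP (conj t0 t1)).
rewrite -(proper_fineK Xu) -(proper_fineK Xv) -!EFinM -EFinD.
move: (Xproper.1 (t *: u + (1 - t) *: v)); case: (X _) => // r _.
by rewrite lee_fin; split; first exact: ltry.
Qed.

(* strong convexity of the prox objective: its value at [u] exceeds the minimum
   by at least |u - P x y c|^2 / (2 c) *)
Lemma prox_three_point x y c u : 0 < c -> (X u < +oo)%E ->
  dot y (P x y c) + sq (P x y c - x) / (2 * c) + Xr (P x y c)
  <= dot y u + sq (u - x) / (2 * c) - sq (u - P x y c) / (2 * c) + Xr u.
Proof.
move=> c0 Xu; set p := P x y c; have Xp := prox_dom x y c0.
have c2 : 0 < (2 * c)^-1 by rewrite invr_gt0; lra.
apply: (@le_of_le_addM_small _ _ _ (sq (u - p) / (2 * c))).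
  by rewrite divr_ge0 ?dot_ge0 //; lra.
move=> t /andP[t0 t1].
have [Xut Xut_le] := convex_dom_le (introT andP (conj t0 (ltW t1))) Xu Xp.
have := prox_le x y c0 Xut.
rewrite (_ : t *: u + (1 - t) *: p - x = t *: (u - x) + (1 - t) *: (p - x)); last first.
  by apply/rowP => i; rewrite !mxE; ring.
rewrite dot_lincomb (dotDr (t *: u)) (dotZr t u) (dotZr (1 - t) p) => opt.
rewrite (_ : u - p = (u - x) - (p - x)); last by rewrite opprB addrA subrK.
rewrite (dot_sub (u - x) (p - x)) -/p in Xut_le opt *.
set s1 := sq (u - x) in opt *; set s2 := sq (p - x) in opt *.
set s12 := dot (u - x) (p - x) in opt *.
rewrite -(ler_pM2l t0) !mulrA; rewrite ?mulrA in opt; nra.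
Qed.

End Prox.

Section AGRecursion.
Variables (R : realType) (n : nat).
Variables (P : 'rV[R]_n -> 'rV[R]_n -> R -> 'rV[R]_n) (g : 'rV[R]_n -> 'rV[R]_n).
Variables (L : R) (x0 : 'rV[R]_n).

Lemma ag_xS k : ag_x P g L x0 k.+1 =
  P (ag_x P g L x0 k) (g (ag_xmd P g L x0 k.+1)) (ag_lambda L k.+1).
Proof. by rewrite /ag_xmd /ag_x /ag_xag /=; case: (ag_state P g L x0 k). Qed.

Lemma ag_xagS k : ag_xag P g L x0 k.+1 =
  P (ag_xmd P g L x0 k.+1) (g (ag_xmd P g L x0 k.+1)) (ag_beta L).
Proof. by rewrite /ag_xmd /ag_x /ag_xag /=; case: (ag_state P g L x0 k). Qed.

End AGRecursion.

Section AGParameters.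
Variables (R : realType) (L : R).
Hypothesis L_gt0 : 0 < L.

Lemma ag_beta_gt0 : 0 < ag_beta L.
Proof. by rewrite divr_gt0 ?mulr_gt0. Qed.

Lemma invr_2beta : (2 * ag_beta L)^-1 = L.
Proof. by rewrite /ag_beta; field; rewrite gt_eqF. Qed.

Lemma ag_alphaS k : ag_alpha R k.+1 = 2 / (k%:R + 2).
Proof. by rewrite /ag_alpha -natr1; congr (_ / _); ring. Qed.

Lemma ag_lambdaS k : ag_lambda L k.+1 = (k%:R + 1) / (4 * L).
Proof. by rewrite /ag_lambda /ag_beta -natr1; field; rewrite gt_eqF. Qed.

Lemma ag_alphaS_itv k : 0 < ag_alpha R k.+1 <= 1.
Proof.
have k0 : 0 <= k%:R :> R by [].
by rewrite ag_alphaS divr_gt0 ?ler_pdivrMr //=; lra.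
Qed.

Lemma ag_lambdaS_gt0 k : 0 < ag_lambda L k.+1.
Proof.
have k0 : 0 <= k%:R :> R by [].
by rewrite ag_lambdaS divr_gt0 ?mulr_gt0 //; lra.
Qed.

Lemma ag_alpha_lambda_le k :
  ag_alpha R k.+1 ^+ 2 * L <= ag_alpha R k.+1 / (2 * ag_lambda L k.+1).
Proof.
rewrite ag_alphaS ag_lambdaS.
have k0 : 0 <= k%:R :> R by [].
rewrite -subr_ge0 (_ : _ - _ = 4 * L / ((k%:R + 1) * (k%:R + 2) ^+ 2)).
  by rewrite divr_ge0 ?mulr_ge0 ?sqr_ge0 ?ltW //; lra.
by field; apply/and3P; split; rewrite gt_eqF //; lra.
Qed.

Definition ag_weight (k : nat) : R := k%:R * (k%:R + 1) / 2.

Lemma ag_weight_ge0 k : 0 <= ag_weight k.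
Proof. by rewrite divr_ge0 ?mulr_ge0 ?addr_ge0. Qed.

Lemma ag_weightS_alpha k : ag_weight k.+1 * ag_alpha R k.+1 = k.+1%:R.
Proof. by rewrite /ag_weight ag_alphaS -natr1; field; rewrite gt_eqF //; lra. Qed.

Lemma ag_weightS_alphaC k : ag_weight k.+1 * (1 - ag_alpha R k.+1) = ag_weight k.
Proof. by rewrite /ag_weight ag_alphaS -natr1; field; rewrite gt_eqF //; lra. Qed.

Lemma ag_weightS_alpha_lambda k :
  ag_weight k.+1 * (ag_alpha R k.+1 / (2 * ag_lambda L k.+1)) = 2 * L.
Proof.
rewrite /ag_weight ag_alphaS ag_lambdaS -natr1.
by field; apply/and3P; split; rewrite gt_eqF //; lra.
Qed.

Lemma sum_ag_weight N :
  \sum_(1 <= k < N.+1) ag_weight k = N%:R * (N%:R + 1) * (N%:R + 2) / 6.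
Proof.
elim: N => [|N IH]; first by rewrite big_geq // !mul0r.
by rewrite big_nat_recr //= IH /ag_weight -natr1; field.
Qed.

End AGParameters.

Lemma bigmin_le_seq (R : realDomainType) (I : eqType) (r : seq I) (x0 : R)
    (F : I -> R) k :
  k \in r -> \big[Num.min/x0]_(i <- r) F i <= F k.
Proof.
elim: r => // i r IH; rewrite inE big_cons => /orP[/eqP->|kr].
  by rewrite ge_min lexx.
by rewrite ge_min IH ?orbT.
Qed.

Lemma bigmin_mul_sum_le (R : realDomainType) (I : eqType) (r : seq I) (x0 : R)
    (F w : I -> R) :
  (forall i, i \in r -> 0 <= w i) ->
  \big[Num.min/x0]_(i <- r) F i * \sum_(i <- r) w i <= \sum_(i <- r) w i * F i.
Proof.
move=> w0; rewrite mulr_sumr big_seq [leRHS]big_seq; apply: ler_sum => i ir.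
by rewrite mulrC ler_wpM2l ?w0 ?bigmin_le_seq.
Qed.

Section CompositeAG.
Variables (R : realType) (n : nat).
Variables (f h : 'rV[R]_n -> R) (gf gh : 'rV[R]_n -> 'rV[R]_n).
Variables (X : 'rV[R]_n -> \bar R) (P : 'rV[R]_n -> 'rV[R]_n -> R -> 'rV[R]_n).
Variables (Lf Lh : R).
Hypotheses (fgf : is_gradient f gf) (Lf_ge0 : 0 <= Lf) (gfL : lipschitz_with Lf gf).
Hypotheses (hgh : is_gradient h gh) (hconvex : convex_fun h) (Lh_ge0 : 0 <= Lh).
Hypotheses (ghL : lipschitz_with Lh gh) (L_gt0 : 0 < Lf + Lh).
Hypotheses (Xproper : proper_fun X) (Xconvex : convex_efun X) (Pprox : is_prox_map X P).

Local Notation L := (Lf + Lh).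
Local Notation g u := (gf u + gh u).
Local Notation Psi u := (f u + h u).
Local Notation sq u := (dot u u).
Local Notation Phi u := (f u + h u + fine (X u)).

Lemma Psi_le_model x y : Psi y <= Psi x + dot (g x) (y - x) + L / 2 * sq (y - x).
Proof.
have := lipschitz_gradient_le fgf gfL x y; have := lipschitz_gradient_le hgh ghL x y.
by rewrite (dotDl (gf x)); lra.
Qed.

(* the convex part [h] contributes no curvature to the lower model *)
Lemma Psi_model_le x y : Psi x + dot (g x) (y - x) <= Psi y + Lf / 2 * sq (y - x).
Proof.
have := lipschitz_gradient_ge fgf gfL x y; have := convex_gradient_le hgh ghL hconvex Lh_ge0 x y.
by rewrite (dotDl (gf x)); lra.
Qed.

(* The [sq (p - b)] term is the slack of the three-point inequality: it is
   nonnegative once [al * lam <= ag_beta L], and at the first step it absorbs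
   the error caused by the nonconvexity of [f]. *)
Lemma ag_step_le (a b z : 'rV[R]_n) (al lam : R)
  (xm := (1 - al) *: a + al *: b)
  (p := P b (g xm) lam) (q := P xm (g xm) (ag_beta L)) :
  0 < al <= 1 -> 0 < lam -> (X a < +oo)%E -> (X z < +oo)%E ->
  Phi q - Phi z <=
    (1 - al) * (Phi a - Phi z) + al / (2 * lam) * (sq (z - b) - sq (z - p))
    + Lf / 2 * ((1 - al) * sq (a - xm) + al * sq (z - xm))
    - (al / (2 * lam) - al ^+ 2 * L) * sq (p - b) - L / 2 * sq (q - xm).
Proof.
move=> al01 lam0 Xa Xz; have /andP[al0 al1] := al01.
have Xp : (X p < +oo)%E := prox_dom Xproper Pprox _ _ lam0.
have [Xu Xu_le] := convex_dom_le Xproper Xconvex al01 Xp Xa.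
have up := Psi_le_model xm q.
have optq := prox_le Xproper Pprox xm (g xm) (ag_beta_gt0 L_gt0) Xu.
have low_a := Psi_model_le xm a.
have low_z := Psi_model_le xm z.
have three := prox_three_point Xproper Xconvex Pprox b (g xm) lam0 Xz.
rewrite invr_2beta // (_ : al *: p + (1 - al) *: a - xm = al *: (p - b)) in optq; last first.
  by apply/rowP => i; rewrite !mxE; ring.
rewrite dotZl dotZr (dotDr (al *: p)) (dotZr al p) (dotZr (1 - al) a) in optq.
rewrite dotBr in up; rewrite dotBr in low_a; rewrite dotBr in low_z.
have al1' : 0 <= 1 - al by lra.
have := ler_wpM2l (ltW al0) three; have := ler_wpM2l (ltW al0) low_z.
have := ler_wpM2l al1' low_a; rewrite -/p -/q in up optq *; lra.
Qed.

Variable M : R.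
Hypothesis Pbounded : forall x y c, 0 < c -> enorm (P x y c) <= M.

Lemma sq_prox_le x y c : 0 < c -> sq (P x y c) <= M ^+ 2.
Proof.
move=> c0; have := Pbounded x y c0; have := enorm_ge0 (P x y c).
by rewrite -enorm_sq; nra.
Qed.

Lemma sq_G_map x : sq (G_map P x (g x) (ag_beta L))
  = 4 * L ^+ 2 * sq (P x (g x) (ag_beta L) - x).
Proof.
rewrite /G_map dotZl dotZr (dot_subC x) /ag_beta.
by field; rewrite gt_eqF.
Qed.

Variables (x0 z : 'rV[R]_n).
Hypothesis z_opt : forall x, ((f z + h z)%:E + X z <= (f x + h x)%:E + X x)%E.

Local Notation xk k := (ag_x P (fun u => g u) L x0 k).
Local Notation xag k := (ag_xag P (fun u => g u) L x0 k).
Local Notation xmd k := (ag_xmd P (fun u => g u) L x0 k).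

Definition ag_gap k := Phi (xag k) - Phi z.
Definition ag_dist k := sq (z - xk k).
Definition ag_Gsq k := sq (G_map P (xmd k) (g (xmd k)) (ag_beta L)).
Definition ag_radius := sq z + 2 * M ^+ 2.
Definition ag_potential k := ag_weight R k * ag_gap k + 2 * L * ag_dist k.

Lemma opt_dom : (X z < +oo)%E.
Proof.
have [x Xx] := Xproper.2; have := z_opt x; rewrite -(proper_fineK Xproper Xx).
by move: (Xproper.1 z); case: (X z) => // r _ _; exact: ltry.
Qed.

Lemma ag_xag_dom k : (0 < k)%N -> (X (xag k) < +oo)%E.
Proof.
by case: k => // k _; rewrite ag_xagS; apply: (prox_dom Xproper Pprox); exact: ag_beta_gt0.
Qed.

Lemma ag_gap_ge0 k : (0 < k)%N -> 0 <= ag_gap k.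
Proof.
move=> k0; have := z_opt (xag k).
rewrite -(proper_fineK Xproper (ag_xag_dom k0)) -(proper_fineK Xproper opt_dom).
by rewrite -!EFinD lee_fin subr_ge0.
Qed.

Lemma sq_ag_x_le k : (0 < k)%N -> sq (xk k) <= M ^+ 2.
Proof. by case: k => // k _; rewrite ag_xS sq_prox_le // ag_lambdaS_gt0. Qed.

Lemma sq_ag_xag_le k : (0 < k)%N -> sq (xag k) <= M ^+ 2.
Proof. by case: k => // k _; rewrite ag_xagS sq_prox_le // ag_beta_gt0. Qed.

(* The first iteration has [alpha_1 = 1]; it is the step lemma with the
   (irrelevant) previous aggregate point taken to be [z], which lies in the domain. *)
Lemma ag_potential1_le :
  ag_potential 1 + ag_weight R 1 * ag_Gsq 1 / (8 * L)
  <= 2 * L * ag_dist 0 + 2 * Lf * ag_radius.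
Proof.
have al1 : ag_alpha R 1 = 1 by rewrite /ag_alpha; field.
have lam1 : 1 / (2 * ag_lambda L 1) = 2 * L.
  by rewrite (ag_lambdaS L_gt0 0); field; rewrite gt_eqF.
have md1 : xmd 1 = x0 by rewrite /ag_xmd /ag_md /= al1 subrr scale0r add0r scale1r.
have := @ag_step_le z x0 z 1 (ag_lambda L 1) (introT andP (conj ltr01 (lexx 1)))
  (ag_lambdaS_gt0 L_gt0 0) opt_dom opt_dom.
rewrite subrr scale0r add0r scale1r lam1 expr1n !mul0r !mul1r !add0r.
rewrite /ag_potential /ag_gap /ag_dist /ag_Gsq (ag_xagS _ _ _ _ 0) (ag_xS _ _ _ _ 0).
have w1 : ag_weight R 1 = 1 by rewrite /ag_weight; field.
rewrite sq_G_map md1 w1 !mul1r /=.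
set q := P x0 _ (ag_beta L); set p := P x0 _ (ag_lambda L 1) => step.
have zx0 : sq (z - x0) <= 2 * sq (z - p) + 2 * sq (p - x0).
  by have := dot_add_le (z - p) (p - x0); rewrite addrA subrK.
have px0 : Lf * sq (p - x0) <= L * sq (p - x0) by rewrite ler_wpM2r ?dot_ge0 ?lerDl.
have zp : Lf * sq (z - p) <= Lf * (2 * ag_radius).
  apply: ler_wpM2l => //; apply: le_trans (dot_sub_le z p) _.
  have := sqr_ge0 M; have := sq_prox_le x0 (g x0) (ag_lambdaS_gt0 L_gt0 0).
  by rewrite /ag_radius; lra.
have -> : 4 * L ^+ 2 * sq (q - x0) / (8 * L) = L / 2 * sq (q - x0).
  by field; rewrite gt_eqF.
have := ler_wpM2l Lf_ge0 zx0; lra.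
Qed.

Lemma ag_potentialS_le k : (0 < k)%N ->
  ag_potential k.+1 + ag_weight R k.+1 * ag_Gsq k.+1 / (8 * L)
  <= ag_potential k + Lf * ag_radius * k.+1%:R.
Proof.
move=> k0; have al01 := ag_alphaS_itv R k; have lam0 := ag_lambdaS_gt0 L_gt0 k.
have := @ag_step_le (xag k) (xk k) z _ _ al01 lam0 (ag_xag_dom k0) opt_dom.
rewrite /ag_potential /ag_gap /ag_dist /ag_Gsq ag_xagS ag_xS sq_G_map.
set al := ag_alpha R k.+1; set lam := ag_lambda L k.+1.
rewrite /ag_xmd /ag_md /= -/al.
set xm := (1 - al) *: xag k + al *: xk k; set q := P xm _ (ag_beta L); set p := P (xk k) _ lam.
move=> step.
have W0 := ag_weight_ge0 R k.+1.
have al01w : 0 <= al <= 1 by case/andP: al01 => al0 ->; rewrite ltW.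
have E_le := @dot_convex_comb_dist_le _ _ al (xag k) (xk k) z _ al01w (sq_ag_xag_le k0) (sq_ag_x_le k0).
rewrite -/xm -/(ag_radius) in E_le.
set W := ag_weight R k.+1 in W0 *; set A := Phi (xag k) - Phi z in step *.
set E := _ + al * _ in step E_le; set B := sq (z - xk k) - sq (z - p) in step.
set S := sq (p - xk k) in step; set Q := sq (q - xm) in step *.
have i1 : W * ((1 - al) * A) = ag_weight R k * A by rewrite mulrA ag_weightS_alphaC.
have i2 : W * (al / (2 * lam) * B) = 2 * L * B by rewrite mulrA ag_weightS_alpha_lambda.
have i3 : W * (Lf / 2 * E) <= Lf * ag_radius * k.+1%:R.
  rewrite -(ag_weightS_alpha R k) -/al -/W.
  have : W * (Lf / 2 * E) <= W * (Lf / 2 * (2 * al * ag_radius)).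
    by rewrite ler_wpM2l // ler_wpM2l // divr_ge0.
  suff -> : W * (Lf / 2 * (2 * al * ag_radius)) = Lf * ag_radius * (W * al) by [].
  by field.
have i4 : 0 <= W * ((al / (2 * lam) - al ^+ 2 * L) * S).
  by rewrite mulr_ge0 // mulr_ge0 ?dot_ge0 // subr_ge0 ag_alpha_lambda_le.
have i5 : W * (4 * L ^+ 2 * Q) / (8 * L) = W * (L / 2 * Q) by field; rewrite gt_eqF.
have := ler_wpM2l W0 step; rewrite /B in i2 *; lra.
Qed.

Lemma ag_potential_sum_le N : (0 < N)%N ->
  ag_potential N + \sum_(1 <= k < N.+1) ag_weight R k * ag_Gsq k / (8 * L)
  <= 2 * L * ag_dist 0 + Lf * ag_radius * (N%:R * (N%:R + 1) / 2 + 1).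
Proof.
elim: N => [//|[_ _|N IH _]].
  have := ag_potential1_le; rewrite big_nat1 (_ : 1%:R = 1 :> R) //.
  by rewrite (_ : 1 * (1 + 1) / 2 + 1 = 2 :> R); [lra | field].
rewrite big_nat_recr //=.
have := ag_potentialS_le (ltn0Sn N); have := IH isT.
rewrite (_ : N.+2%:R * (N.+2%:R + 1) / 2 + 1 =
  N.+1%:R * (N.+1%:R + 1) / 2 + 1 + N.+2%:R :> R); first lra.
by rewrite -(natr1 N.+1); field.
Qed.

Lemma ag_potential_ge0 k : (0 < k)%N -> 0 <= ag_potential k.
Proof.
move=> k0; apply: addr_ge0; first by rewrite mulr_ge0 ?ag_weight_ge0 ?ag_gap_ge0.
by rewrite !mulr_ge0 ?dot_ge0 // ltW.
Qed.

Lemma ag_min_Gsq_le N : (0 < N)%N ->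
  \big[Num.min/ag_Gsq 1]_(1 <= k < N.+1) ag_Gsq k
  <= 48 * L * (2 * L * ag_dist 0 + Lf * ag_radius * (N%:R * (N%:R + 1) / 2 + 1))
     / (N%:R * (N%:R + 1) * (N%:R + 2)).
Proof.
move=> N0; have N1 : 1 <= N%:R :> R by rewrite ler1n.
have := @bigmin_mul_sum_le _ _ (index_iota 1 N.+1) (ag_Gsq 1) ag_Gsq _
  (fun k _ => ag_weight_ge0 R k).
rewrite sum_ag_weight.
set m := \big[_/_]_(_ <- _) _; set T := \sum_(_ <- _) _ => min_le.
have T_le : T <= 8 * L * (2 * L * ag_dist 0 + Lf * ag_radius * (N%:R * (N%:R + 1) / 2 + 1)).
  rewrite mulrC -ler_pdivrMr ?mulr_gt0 //.
  have := ag_potential_sum_le N0; have := ag_potential_ge0 N0.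
  by rewrite -mulr_suml -/T; lra.
rewrite ler_pdivlMr; last by rewrite !mulr_gt0 //; lra.
by rewrite mulrA in min_le; lra.
Qed.

Lemma ag_gap_le N : Lf = 0 -> (0 < N)%N ->
  ag_gap N <= 4 * L * ag_dist 0 / (N%:R * (N%:R + 1)).
Proof.
move=> Lf0 N0; have N1 : 1 <= N%:R :> R by rewrite ler1n.
have sum_ge0 : 0 <= \sum_(1 <= k < N.+1) ag_weight R k * ag_Gsq k / (8 * L).
  apply: sumr_ge0 => k _; rewrite !mulr_ge0 ?ag_weight_ge0 ?dot_ge0 //.
  by rewrite invr_ge0 mulr_ge0 // ltW.
have := ag_potential_sum_le N0.
rewrite /ag_potential (_ : Lf * _ * _ = 0); last by rewrite Lf0 !mul0r.
have L0 : 0 <= L * ag_dist N by rewrite /ag_dist mulr_ge0 ?dot_ge0 // ltW.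
rewrite ler_pdivlMr; last by rewrite mulr_gt0 //; lra.
rewrite (_ : ag_gap N * _ = 2 * (ag_weight R N * ag_gap N)); first lra.
by rewrite /ag_weight; field.
Qed.
End CompositeAG.

Lemma ag_rate_le (R : realFieldType) (L Lf D C K : R) :
  0 < L -> 0 <= Lf -> 0 <= D -> 0 <= C -> 1 <= K ->
  48 * L * (2 * L * D + Lf * C * (K * (K + 1) / 2 + 1)) / (K * (K + 1) * (K + 2))
  <= 24%:R * L * (4%:R * L * D / (K ^+ 2 * (K + 1)) + Lf / K * C).
Proof.
move=> L0 Lf0 D0 C0 K1; rewrite -subr_ge0.
rewrite (_ : _ - _ = (192 * L * (L * D) + 48 * (L * Lf * C) * K ^+ 2)
                     / (K ^+ 2 * (K + 1) * (K + 2))); last first.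
  by field; apply/and3P; split; rewrite gt_eqF //; lra.
by rewrite divr_ge0 ?addr_ge0 ?mulr_ge0 ?sqr_ge0 ?addr_ge0 // ?ltW //; lra.
Qed.

(* [closed_fun X] and [bounded_dom X] only serve to guarantee that the prox map exists
   and is bounded, which the statement assumes directly. *)
Theorem corollary2 (R : realType) (n : nat)
  (f h : 'rV[R]_n -> R) (gf gh : 'rV[R]_n -> 'rV[R]_n)
  (X : 'rV[R]_n -> \bar R) (P : 'rV[R]_n -> 'rV[R]_n -> R -> 'rV[R]_n)
  (Lf Lh M : R) (x0 xstar : 'rV[R]_n) :
  is_gradient f gf -> 0 <= Lf -> lipschitz_with Lf gf ->
  is_gradient h gh -> convex_fun h -> 0 <= Lh -> lipschitz_with Lh gh ->
  0 < Lf + Lh ->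
  proper_fun X -> closed_fun X -> convex_efun X -> bounded_dom X ->
  is_prox_map X P ->
  (forall x y c, 0 < c -> enorm (P x y c) <= M) ->
  (forall x, ((f xstar + h xstar)%:E + X xstar <= (f x + h x)%:E + X x)%E) ->
  let LPsi := Lf + Lh in
  let gPsi := fun x => gf x + gh x in
  let Phi := fun x => ((f x + h x)%:E + X x)%E in
  let xmd := ag_xmd P gPsi LPsi x0 in
  let xag := ag_xag P gPsi LPsi x0 in
  let Gn := fun k : nat =>
    enorm (G_map P (xmd k) (gPsi (xmd k)) (ag_beta LPsi)) ^+ 2 in
  forall N : nat, (1 <= N)%N ->
    \big[Num.min/Gn 1%N]_(1 <= k < N.+1) Gn k
      <= 24%:R * LPsi * (4%:R * LPsi * enorm (x0 - xstar) ^+ 2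
                          / (N%:R ^+ 2 * (N%:R + 1))
                        + Lf / N%:R * (enorm xstar ^+ 2 + 2%:R * M ^+ 2))
    /\ (Lf = 0 ->
        (Phi (xag N) - Phi xstar
           <= (4%:R * LPsi * enorm (x0 - xstar) ^+ 2 / (N%:R * (N%:R + 1)))%:E)%E).
Proof.
move=> fgf Lf_ge0 gfL hgh hconvex Lh_ge0 ghL L_gt0 Xproper _ Xconvex _ Pprox
  Pbounded xstar_opt LPsi gPsi Phi xmd xag Gn N N_ge1.
have dist0E : ag_dist gf gh P Lf Lh x0 xstar 0 = enorm (x0 - xstar) ^+ 2.
  by rewrite /ag_dist enorm_sq dot_subC.
have radiusE : ag_radius M xstar = enorm xstar ^+ 2 + 2%:R * M ^+ 2.
  by rewrite /ag_radius enorm_sq.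
have GnE k : Gn k = ag_Gsq gf gh P Lf Lh x0 k by rewrite /Gn enorm_sq.
split.
  rewrite (eq_bigr _ (fun k _ => GnE k)) GnE.
  apply: le_trans (ag_min_Gsq_le fgf Lf_ge0 gfL hgh hconvex Lh_ge0 ghL L_gt0
    Xproper Xconvex Pprox Pbounded x0 xstar_opt N_ge1) _.
  rewrite dist0E radiusE; apply: ag_rate_le; rewrite ?ler1n ?sqr_ge0 //.
  by rewrite addr_ge0 ?sqr_ge0 // mulr_ge0 ?sqr_ge0.
move=> Lf0; have := ag_gap_le fgf Lf_ge0 gfL hgh hconvex Lh_ge0 ghL L_gt0
  Xproper Xconvex Pprox Pbounded x0 xstar_opt Lf0 N_ge1.
rewrite /ag_gap dist0E /Phi => gap_le.
rewrite -(proper_fineK Xproper (ag_xag_dom gf gh L_gt0 Xproper Pprox x0 N_ge1)).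
by rewrite -(proper_fineK Xproper (opt_dom Xproper xstar_opt)) -!EFinD lee_fin.
Qed.
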